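(* For any $k\in\mathbb{N}$, there exist simple connected graphs $G$ and $G'$ (each with at least one edge) such that $\mathrm{diam}(G)-\omega'(G)=k$ and $\omega'(G')-\mathrm{diam}(G')=k$.
   Context: For distinct $u_1,u_2\in V(G)$, an edge $e$ separates $u_1,u_2$ if $e$ lies on every shortest $(u_1,u_2)$-path in $G$. The auxiliary graph $H(G)$ has vertex set $E(G)$, and distinct edges $e_1,e_2$ are adjacent in $H(G)$ iff some pair of distinct vertices of $G$ is separated by both $e_1$ and $e_2$. $\omega'(G)$ denotes the clique number of $H(G)$, and $\mathrm{diam}(G)$ is the diameter of $G$. *)

From mathcomp Require Import all_boot.
Set Implicit Arguments. Unset Strict Implicit. Unset Printing Implicit Defensive.

Section Graphs.
Variables (T : finType) (e : rel T).

Definition simple_graph := symmetric e /\ irreflexive e.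
Definition connected_graph := forall u v : T, connect e u v.
Definition has_edge := exists u v : T, e u v.

Definition is_edge (A : {set T}) : bool :=
  [exists x, exists y, e x y && (A == [set x; y])].

(* a walk from u is a sequence p with path e u p; it ends at last u p and has length size p *)
Definition walk (u v : T) (p : seq T) := path e u p /\ last u p = v.

Definition shortest_path (u v : T) (p : seq T) :=
  walk u v p /\ forall q, walk u v q -> size p <= size q.

Definition edges_of (u : T) (p : seq T) : seq {set T} :=
  pairmap (fun x y => [set x; y]) u p.

Definition separates (A : {set T}) (u1 u2 : T) :=
  u1 != u2 /\ forall p, shortest_path u1 u2 p -> A \in edges_of u1 p.

Definition H_adj (A B : {set T}) :=
  A != B /\ exists u1 u2 : T, separates A u1 u2 /\ separates B u1 u2.

Definition H_clique (S : {set {set T}}) :=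
  (forall A, A \in S -> is_edge A) /\
  (forall A B, A \in S -> B \in S -> A != B -> H_adj A B).

Definition omega'_is (w : nat) :=
  (exists S, H_clique S /\ #|S| = w) /\ (forall S, H_clique S -> #|S| <= w).

Definition dist_is (u v : T) (n : nat) :=
  (exists p, walk u v p /\ size p = n) /\ (forall q, walk u v q -> n <= size q).

Definition diam_is (d : nat) :=
  (forall u v, exists n, dist_is u v n /\ n <= d) /\ (exists u v, dist_is u v d).

End Graphs.

From mathcomp Require Import all_boot zify.
Set Implicit Arguments. Unset Strict Implicit. Unset Printing Implicit Defensive.

(* If every vertex of the path P_(n+1) is replaced by two non-adjacent twins,
   the diameter stays n, but between two non-adjacent vertices we can route a
   shortest path through the twin that avoids any prescribed edge on every
   intermediate level.  Hence only adjacent pairs are separated, H(G) has no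
   edges and omega' = 1, giving diam - omega' = n - 1 (and P_3 gives 0).
   In the star K_(1,m+2), the two edges at leaves x, y both separate x and y,
   so H(G) is complete on m+2 vertices while the diameter is 2. *)

Section Walks.
Variables (T : finType) (e : rel T).

Lemma walk_nil u v : walk e u v [::] -> u = v.
Proof. by case. Qed.

Lemma walk_cons u v x p : walk e u v (x :: p) <-> e u x /\ walk e x v p.
Proof. by rewrite /walk /=; split=> [[/andP[-> ->] ->] | [-> [-> ->]]]. Qed.

Lemma walk_seq1 u v : walk e u v [:: v] <-> e u v.
Proof. by rewrite walk_cons; split=> [[] | ]. Qed.

Lemma mem_edges_of A u p : A \in edges_of u p ->
  exists x y : T, [/\ x \in u :: p, y \in u :: p & A = [set x; y]].
Proof.
elim: p u => [//|x p IHp] u /=; rewrite inE => /orP[/eqP-> | /IHp[a [b [a_p b_p ->]]]].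
  by exists u, x; rewrite !inE !eqxx orbT.
by exists a, b; split=> //; rewrite in_cons ?a_p ?b_p orbT.
Qed.

Lemma shortest_path_edge u v : e u v -> u != v -> shortest_path e u v [:: v].
Proof.
move=> euv neq_uv; split=> [|[|x q] //]; first exact/walk_seq1.
by move/walk_nil=> eq_uv; rewrite eq_uv eqxx in neq_uv.
Qed.

Lemma separates_edge A u v : e u v -> separates e A u v -> A = [set u; v].
Proof.
move=> euv [neq_uv sepA].
by have := sepA _ (shortest_path_edge euv neq_uv); rewrite inE => /eqP.
Qed.

Section Distance.
Variable D : T -> T -> nat.
Hypothesis D_lb : forall u v p, walk e u v p -> D u v <= size p.
Hypothesis D_attained : forall u v, exists p, walk e u v p /\ size p = D u v.

Lemma dist_isD u v : dist_is e u v (D u v).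
Proof. by split; [apply: D_attained | apply: D_lb]. Qed.

Lemma shortest_path_sizeD u v p : shortest_path e u v p -> size p = D u v.
Proof.
case=> walk_p min_p; apply/eqP; rewrite eqn_leq D_lb // andbT.
by have [q [walk_q <-]] := D_attained u v; apply: min_p.
Qed.

Lemma shortest_pathD u v p : walk e u v p -> size p = D u v -> shortest_path e u v p.
Proof. by move=> walk_p size_p; split=> // q walk_q; rewrite size_p D_lb. Qed.

Lemma connectedD : connected_graph e.
Proof.
by move=> u v; have [p [[e_p last_p] _]] := D_attained u v; apply/connectP; exists p.
Qed.

Lemma diam_isD d u0 v0 : (forall u v, D u v <= d) -> D u0 v0 = d -> diam_is e d.
Proof.
move=> D_le D_uv0; split=> [u v | ]; first by exists (D u v); split; [apply: dist_isD |].
by exists u0, v0; rewrite -D_uv0; apply: dist_isD.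
Qed.

End Distance.

Definition edge_set : {set {set T}} := [set A | is_edge e A].

Lemma omega'_is_edge_set :
  (forall A B, is_edge e A -> is_edge e B -> A != B -> H_adj e A B) ->
  omega'_is e #|edge_set|.
Proof.
move=> adj_edges; split.
  exists edge_set; split=> //; split=> [A | A B]; rewrite !inE //; exact: adj_edges.
by case=> S [S_edges _]; apply/subset_leq_card/subsetP=> A /S_edges; rewrite inE.
Qed.

Lemma omega'_is1 : has_edge e ->
  (forall A u v, is_edge e A -> separates e A u v -> e u v) -> omega'_is e 1.
Proof.
move=> [u [v euv]] sep_adj; split.
  exists [set [set u; v]]; split; last exact: cards1.
  split=> [A | A B]; rewrite !inE => /eqP->; last by move=> /eqP->; rewrite eqxx.
  by apply/existsP; exists u; apply/existsP; exists v; rewrite euv eqxx.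
case=> S [S_edges S_adj]; apply/card_le1_eqP=> A B A_S B_S.
have [// | neq_AB] := eqVneq A B.
have [_ [u1 [u2 [sepA sepB]]]] := S_adj A B A_S B_S neq_AB.
have e12 := sep_adj A u1 u2 (S_edges A A_S) sepA.
by rewrite (separates_edge e12 sepA) (separates_edge e12 sepB).
Qed.

End Walks.

Section Star.
Variable m : nat.
Local Notation V := (option 'I_m.+2).

Definition star : rel V := fun x y => (x == None) != (y == None).

Definition star_dist (x y : V) : nat :=
  if x == y then 0 else if (x == None) || (y == None) then 1 else 2.

Lemma star_simple : simple_graph star.
Proof. by split=> [x y | x]; rewrite /star ?eqxx // eq_sym. Qed.

Lemma star_dist_lb u v p : walk star u v p -> star_dist u v <= size p.
Proof.
rewrite /star_dist; case: p => [/walk_nil-> | x [|y p]]; rewrite ?eqxx //.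
  by case=> /andP[uv _] /= <-; case: u x uv => [a|] [b|].
by case: eqP => //; case: ifP.
Qed.

Lemma star_dist_attained u v : exists p, walk star u v p /\ size p = star_dist u v.
Proof.
rewrite /star_dist; have [-> | neq_uv] := eqVneq u v; first by exists [::].
case: u v neq_uv => [a|] [b|] //= _.
- by exists [:: None; Some b].
- by exists [:: None].
- by exists [:: Some b].
Qed.

Lemma star_diam : diam_is star 2.
Proof.
apply: (diam_isD star_dist_lb star_dist_attained
          (u0 := Some ord0) (v0 := Some ord_max)) => //.
by move=> u v; rewrite /star_dist; case: ifP => //; case: ifP.
Qed.

Definition star_edge (i : 'I_m.+2) : {set V} := [set None; Some i].

Lemma star_edge_inj : injective star_edge.
Proof.
move=> i j eq_ij; have : Some i \in star_edge j by rewrite -eq_ij !inE eqxx orbT.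
by rewrite !inE => /eqP[].
Qed.

Lemma is_edge_starP A : reflect (exists i, A = star_edge i) (is_edge star A).
Proof.
apply: (iffP existsP) => [[x /existsP[y /andP[exy /eqP->]]] | [i ->]].
  by case: x y exy => [a|] [b|] // _; [exists a; rewrite setUC | exists b].
by exists None; apply/existsP; exists (Some i); rewrite eqxx.
Qed.

Lemma card_star_edge_set : #|edge_set star| = m.+2.
Proof.
have -> : edge_set star = star_edge @: 'I_m.+2.
  apply/setP=> A; rewrite inE.
  by apply/is_edge_starP/imsetP=> [[i ->] | [i _ ->]]; exists i.
by rewrite card_imset ?card_ord //; apply: star_edge_inj.
Qed.

Lemma star_leaf_shortest i j p : i != j ->
  shortest_path star (Some i) (Some j) p -> p = [:: None; Some j].
Proof.
move=> neq_ij sp; have := shortest_path_sizeD star_dist_lb star_dist_attained sp.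
rewrite /star_dist (inj_eq Some_inj) (negbTE neq_ij).
case: sp => [[]] + + _; case: p => [|x [|y []]] //=.
by case: x => [a|] // /andP[_ /andP[_ _]] ->.
Qed.

Lemma star_H_adj A B : is_edge star A -> is_edge star B -> A != B -> H_adj star A B.
Proof.
move=> /is_edge_starP[i ->] /is_edge_starP[j ->] neq_ij; split=> //.
have {}neq_ij : i != j by apply: contraNneq neq_ij => ->.
have neq_Sij : Some i != Some j by rewrite (inj_eq Some_inj).
exists (Some i), (Some j); split; split=> // p /(star_leaf_shortest neq_ij)->.
  by rewrite /edges_of /= inE setUC eqxx.
by rewrite /edges_of /= !inE eqxx orbT.
Qed.

Lemma star_omega' : omega'_is star m.+2.
Proof. by have := omega'_is_edge_set star_H_adj; rewrite card_star_edge_set. Qed.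

Lemma star_spec : [/\ simple_graph star, connected_graph star, has_edge star,
  diam_is star 2 & omega'_is star m.+2].
Proof.
split; [exact: star_simple | exact: connectedD star_dist_attained |
        by exists None, (Some ord0) | exact: star_diam | exact: star_omega'].
Qed.

End Star.

Section TwinPath.
Variable n : nat.
Hypothesis n_gt1 : 1 < n.
Local Notation V := ('I_n.+1 * bool)%type.

Definition gap (i j : nat) : nat := (i - j) + (j - i).

Definition twin_path : rel V := fun x y => gap x.1 y.1 == 1.

Definition twin_dist (x y : V) : nat :=
  if x.1 == y.1 :> nat then (if x == y then 0 else 2) else gap x.1 y.1.

Lemma twin_simple : simple_graph twin_path.
Proof. by split=> [x y | x]; rewrite /twin_path /gap ?subnn // addnC. Qed.

Lemma gap_walk_lb u v p : walk twin_path u v p -> gap u.1 v.1 <= size p.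
Proof.
elim: p u => [|x p IHp] u; first by move/walk_nil->; rewrite /gap subnn.
by case/walk_cons=> /eqP + /IHp /=; rewrite /gap; lia.
Qed.

Lemma twin_dist_lb u v p : walk twin_path u v p -> twin_dist u v <= size p.
Proof.
rewrite /twin_dist; case: eqP => [eq_uv1 | _]; last exact: gap_walk_lb.
case: eqP => // neq_uv; case: p => [/walk_nil // | x [|y p] //].
by case/walk_cons=> + /walk_nil x_v; rewrite /twin_path x_v -eq_uv1 /gap subnn.
Qed.

Section Colouring.
Variable c : nat -> bool.

Definition coloured (t : nat) : V := (inord t, c t).

Definition coloured_walk (u v : V) (p : seq V) :=
  walk twin_path u v p /\ {in p, forall y : V, y = v \/ y.2 = c y.1}.

Lemma coloured_walk_gap m (x v : V) : gap x.1 v.1 = m.+1 ->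
  exists2 p, coloured_walk x v p & size p = m.+1.
Proof.
elim: m x => [|m IHm] x gap_xv.
  exists [:: v] => //; split=> [|y]; first by apply/walk_seq1; rewrite /twin_path gap_xv.
  by rewrite inE => /eqP; left.
have [t t_lt [gap_xt gap_tv]] : exists2 t, t < n.+1 & gap x.1 t = 1 /\ gap t v.1 = m.+1.
  exists (if x.1 < v.1 then x.1.+1 else x.1.-1);
    move: gap_xv (ltn_ord x.1) (ltn_ord v.1); rewrite /gap; case: ifP; lia.
have /IHm[p [walk_p col_p] size_p] : gap (coloured t).1 v.1 = m.+1 by rewrite inordK.
exists (coloured t :: p); last by rewrite /= size_p.
split; first by apply/walk_cons; split=> //; rewrite /twin_path inordK ?gap_xt.
by move=> y; rewrite inE => /predU1P[-> | /col_p //]; right; rewrite /= inordK.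
Qed.

Lemma coloured_walk_dist (u v : V) : u != v ->
  exists2 p, coloured_walk u v p & size p = twin_dist u v.
Proof.
move=> neq_uv; rewrite /twin_dist (negbTE neq_uv); case: eqP => [eq_uv1 | neq_uv1].
  have [t t_lt gap_ut] : exists2 t, t < n.+1 & gap u.1 t = 1.
    exists (if u.1 < n then u.1.+1 else u.1.-1);
      move: n_gt1 (ltn_ord u.1); rewrite /gap; case: ifP; lia.
  exists [:: coloured t; v] => //; split=> [|y].
    apply/walk_cons; split; first by rewrite /twin_path inordK ?gap_ut.
    apply/walk_seq1; rewrite /twin_path inordK // -eq_uv1.
    by move: gap_ut; rewrite /gap; lia.
  by rewrite !inE => /orP[/eqP-> | /eqP]; [right; rewrite /= inordK | left].
have [m gap_uv] : exists m, gap u.1 v.1 = m.+1.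
  by exists (gap u.1 v.1).-1; move: neq_uv1; rewrite /gap; lia.
by rewrite gap_uv; apply: coloured_walk_gap.
Qed.

End Colouring.

Lemma twin_dist_attained (u v : V) :
  exists p, walk twin_path u v p /\ size p = twin_dist u v.
Proof.
have [-> | neq_uv] := eqVneq u v; first by exists [::]; rewrite /twin_dist !eqxx.
by have [p [walk_p _] size_p] := coloured_walk_dist (fun=> false) neq_uv; exists p.
Qed.

Lemma twin_separates_adj (A : {set V}) (u1 u2 : V) :
  is_edge twin_path A -> separates twin_path A u1 u2 -> twin_path u1 u2.
Proof.
case/existsP=> a1 /existsP[a2 /andP[e_a12 /eqP eq_A]] [neq_u12 sepA].
apply/contraT=> not_e12.
(* on every level, the walk uses the twin outside A *)
pose c l := if l == a1.1 :> nat then ~~ a1.2 else ~~ a2.2.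
have [p [walk_p col_p] size_p] := coloured_walk_dist c neq_u12.
have /mem_edges_of[x [y [x_p y_p eq_xy]]] :=
  sepA p (shortest_pathD twin_dist_lb walk_p size_p).
have lvl_a12 : (a1 : V).1 != (a2 : V).1 :> nat by move: e_a12; rewrite /twin_path /gap; lia.
have end_A a : a \in A -> a = u1 \/ a = u2.
  have a_p : a \in A -> a \in u1 :: p by rewrite eq_xy !inE => /orP[/eqP-> | /eqP->].
  move=> a_A; case/predU1P: (a_p a_A) => [-> | /col_p[-> | col_a]]; [by left | by right |].
  move: a_A col_a; rewrite eq_A !inE /c => /orP[] /eqP->.
    by rewrite eqxx; case: (a1.2).
  by rewrite eq_sym (negbTE lvl_a12); case: (a2.2).
have a1_A : a1 \in A by rewrite eq_A set21.
have a2_A : a2 \in A by rewrite eq_A set22.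
move: e_a12 not_e12; rewrite /twin_path /gap.
by case: (end_A a1 a1_A) (end_A a2 a2_A) => -> [] ->; lia.
Qed.

Lemma twin_has_edge : has_edge twin_path.
Proof. by exists (ord0, false), (inord 1, false); rewrite /twin_path inordK //; lia. Qed.

Lemma twin_omega' : omega'_is twin_path 1.
Proof. exact: omega'_is1 twin_has_edge twin_separates_adj. Qed.

Lemma twin_diam : diam_is twin_path n.
Proof.
apply: (diam_isD twin_dist_lb twin_dist_attained
          (u0 := (ord0, false)) (v0 := (ord_max, false))).
  move=> [i b] [j b']; have := ltn_ord i; have := ltn_ord j.
  by rewrite /twin_dist /gap /=; case: ifP => _; [case: ifP => _ |]; lia.
by rewrite /twin_dist /gap /=; case: eqP; lia.
Qed.

Lemma twin_path_spec : [/\ simple_graph twin_path, connected_graph twin_path,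
  has_edge twin_path, diam_is twin_path n & omega'_is twin_path 1].
Proof.
split; [exact: twin_simple | exact: connectedD twin_dist_attained |
        exact: twin_has_edge | exact: twin_diam | exact: twin_omega'].
Qed.

End TwinPath.

Theorem proposition2 (k : nat) :
  (exists (T : finType) (e : rel T) (d w : nat),
     simple_graph e /\ connected_graph e /\ has_edge e /\
     diam_is e d /\ omega'_is e w /\ d = w + k) /\
  (exists (T : finType) (e : rel T) (d w : nat),
     simple_graph e /\ connected_graph e /\ has_edge e /\
     diam_is e d /\ omega'_is e w /\ w = d + k).
Proof.
split; last by have [? ? ? ? ?] := star_spec k; exists _, (@star k), 2, k.+2.
case: k => [|k]; first by have [? ? ? ? ?] := star_spec 0; exists _, (@star 0), 2, 2.
by have [? ? ? ? ?] := @twin_path_spec k.+2 erefl; exists _, (@twin_path k.+2), k.+2, 1.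
Qed.
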